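(* Let $T$ be a $3\times2\times3$ quaternion tensor, i.e. $T=(A;B)$ with $A,B\in M_3(\mathbb{H})$. Then $\mathrm{rank}(T)\le4$.
   Context: $\mathbb{H}$ denotes the real quaternions. An $n_1\times n_2\times n_3$ quaternion tensor is an array $T=(T_{ijk})$ with entries in $\mathbb{H}$, $1\le i\le n_1$, $1\le j\le n_2$, $1\le k\le n_3$; it is written $T=(A_1;\dots;A_{n_2})$ where the frontal slice $A_j$ is the $n_1\times n_3$ matrix $(T_{ijk})_{i,k}$. A nonzero tensor is simple if $T_{ijk}=a_ib_jc_k$ (quaternion product in this order) for some $\vec a\in\mathbb{H}^{n_1},\vec b\in\mathbb{H}^{n_2},\vec c\in\mathbb{H}^{n_3}$. The rank of $T$ is the least number of simple tensors summing to $T$ (the zero tensor has rank $0$). *)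

From mathcomp Require Import all_boot all_order all_algebra.
Set Implicit Arguments. Unset Strict Implicit. Unset Printing Implicit Defensive.
Import Order.TTheory GRing.Theory Num.Theory.
Local Open Scope ring_scope.

(* Real quaternions over a real closed field R:  q = re + i*x + j*y + k*z,
   with i^2 = j^2 = k^2 = ijk = -1. *)
Record quat (R : rcfType) := Quat { qre : R; qi : R; qj : R; qk : R }.

Section Quat.
Variable R : rcfType.

Definition qzero : quat R := Quat 0 0 0 0.
Definition qadd (p q : quat R) : quat R :=
  Quat (qre p + qre q) (qi p + qi q) (qj p + qj q) (qk p + qk q).
Definition qmul (p q : quat R) : quat R :=
  Quat (qre p * qre q - qi p * qi q - qj p * qj q - qk p * qk q)
       (qre p * qi q + qi p * qre q + qj p * qk q - qk p * qj q)
       (qre p * qj q - qi p * qk q + qj p * qre q + qk p * qi q)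
       (qre p * qk q + qi p * qj q - qj p * qi q + qk p * qre q).

(* n1 x n2 x n3 quaternion tensors: T i j k = T_{ijk};
   frontal slice A_j = (T i j k)_{i,k}. *)
Definition qtensor (n1 n2 n3 : nat) := 'I_n1 -> 'I_n2 -> 'I_n3 -> quat R.

Definition simple_tensor n1 n2 n3 (T : qtensor n1 n2 n3) : Prop :=
  (exists i j k, T i j k <> qzero) /\
  exists (a : 'I_n1 -> quat R) (b : 'I_n2 -> quat R) (c : 'I_n3 -> quat R),
    forall i j k, T i j k = qmul (qmul (a i) (b j)) (c k).

Definition tsum n1 n2 n3 (S : seq (qtensor n1 n2 n3)) : qtensor n1 n2 n3 :=
  fun i j k => foldr qadd qzero [seq t i j k | t <- S].

Definition qrank_le n1 n2 n3 (T : qtensor n1 n2 n3) (r : nat) : Prop :=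
  exists (m : nat) (S : 'I_m -> qtensor n1 n2 n3),
    (m <= r)%N /\ (forall l, simple_tensor (S l)) /\
    forall i j k, T i j k = tsum [seq S l | l <- enum 'I_m] i j k.

End Quat.

(* A tensor T = (A; B) with frontal slices A, B in M_3(H) is a sum of r simple
   tensors as soon as the pencil (A; B) is a sum of r triads (a b0 c; a b1 c),
   a a column, c a row and b0, b1 quaternions.  Column vectors of H^3 carry the
   right scalar action v |-> v s, written v *m s%:M.

   - H is a division ring: a unitRingType whose units are its nonzero elements.
   - Linear algebra over any such division ring: a wide matrix has a nonzero
     kernel vector (Gaussian elimination), a square matrix with trivial kernel
     has a right inverse, and free families extend by standard basis vectors.
   - In H^3: independent pairs and triples, and the expansion of a matrix along
     a basis, A = A z0 q0 + A z1 q1 + A z2 q2.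
   - Pencils: the "shift" pencils (P1 Q1 + P2 Q2; P2 Q1 + W Q2) and their
     length-three analogue have explicit decompositions of length 3 and 4.
     A pencil whose slices share a kernel vector reduces to a triad plus one
     more rank-one pair, or to a shift pencil: rank <= 3.  A pencil without
     eigenvector (no z with Az, Bz on a common line) has A invertible, and a
     cyclic vector of D = A^-1 B turns it into a length-three shift pencil:
     rank <= 4.  (This case never occurs, since quaternion matrices have right
     eigenvalues, but treating it directly avoids that theorem.)  Otherwise,
     removing one triad along an eigenvector leaves a common kernel vector,
     so the rank is at most 1 + 3.
   - The main theorem translates the pencil decomposition into simple tensors,
     discarding the triads whose tensor vanishes. *)

From HB Require Import structures.
From mathcomp Require Import all_boot all_order all_algebra perm.
From mathcomp Require Import ring.
From Stdlib Require Import Classical.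
Set Implicit Arguments. Unset Strict Implicit. Unset Printing Implicit Defensive.
Import Order.TTheory GRing.Theory Num.Theory.
Local Open Scope ring_scope.

Section QuaternionDivisionRing.
Variable R : rcfType.
Local Notation H := (quat R).

Definition quat_tuple (q : H) := (qre q, qi q, qj q, qk q).
Definition tuple_quat (t : R * R * R * R) : H := Quat t.1.1.1 t.1.1.2 t.1.2 t.2.
Lemma quat_tupleK : cancel quat_tuple tuple_quat. Proof. by case. Qed.
HB.instance Definition _ := Equality.copy H (can_type quat_tupleK).
HB.instance Definition _ := Choice.copy H (can_type quat_tupleK).

Lemma quatP (p q : H) :
  qre p = qre q -> qi p = qi q -> qj p = qj q -> qk p = qk q -> p = q.
Proof. by case: p => ????; case: q => ???? /= -> -> -> ->. Qed.

Definition qopp (p : H) : H := Quat (- qre p) (- qi p) (- qj p) (- qk p).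
Definition qone : H := Quat 1 0 0 0.

Lemma qaddA : associative (@qadd R).
Proof. by move=> *; apply: quatP => /=; ring. Qed.
Lemma qaddC : commutative (@qadd R).
Proof. by move=> *; apply: quatP => /=; ring. Qed.
Lemma qadd0 : left_id (qzero R) (@qadd R).
Proof. by move=> *; apply: quatP => /=; ring. Qed.
Lemma qaddN : left_inverse (qzero R) qopp (@qadd R).
Proof. by move=> *; apply: quatP => /=; ring. Qed.
HB.instance Definition _ := GRing.isZmodule.Build H qaddA qaddC qadd0 qaddN.

Lemma qmulA : associative (@qmul R).
Proof. by move=> *; apply: quatP => /=; ring. Qed.
Lemma qmul1 : left_id qone (@qmul R).
Proof. by move=> *; apply: quatP => /=; ring. Qed.
Lemma qmulr1 : right_id qone (@qmul R).
Proof. by move=> *; apply: quatP => /=; ring. Qed.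
Lemma qmulDl : left_distributive (@qmul R) +%R.
Proof. by move=> *; apply: quatP => /=; ring. Qed.
Lemma qmulDr : right_distributive (@qmul R) +%R.
Proof. by move=> *; apply: quatP => /=; ring. Qed.
Lemma qone_neq0 : qone != 0.
Proof. by apply/eqP => /(congr1 (@qre R)) /= /eqP; rewrite oner_eq0. Qed.
HB.instance Definition _ :=
  GRing.Zmodule_isNzRing.Build H qmulA qmul1 qmulr1 qmulDl qmulDr qone_neq0.

(* The inverse of q is its conjugate divided by its squared norm (0 for q = 0). *)
Definition qnorm (q : H) := qre q ^+ 2 + qi q ^+ 2 + qj q ^+ 2 + qk q ^+ 2.
Definition qinv (q : H) : H :=
  Quat (qre q / qnorm q) (- qi q / qnorm q) (- qj q / qnorm q) (- qk q / qnorm q).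

Lemma qnorm_eq0 (q : H) : (qnorm q == 0) = (q == 0).
Proof.
apply/idP/idP => [|/eqP->]; last by rewrite /qnorm /= expr0n /= !addr0.
rewrite /qnorm !paddr_eq0 ?sqr_ge0 ?addr_ge0 ?sqr_ge0 // !sqrf_eq0.
by case/andP => /andP [/andP [/eqP a /eqP b] /eqP c] /eqP d; apply/eqP/quatP.
Qed.

Lemma qmulVq : {in predC1 0, left_inverse 1 qinv *%R}.
Proof.
move=> q; rewrite inE /= -qnorm_eq0 => nz; rewrite /qnorm in nz.
by apply: quatP => /=; rewrite /qnorm; field.
Qed.

Lemma qmulqV : {in predC1 0, right_inverse 1 qinv *%R}.
Proof.
move=> q; rewrite inE /= -qnorm_eq0 => nz; rewrite /qnorm in nz.
by apply: quatP => /=; rewrite /qnorm; field.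
Qed.

Lemma qunit_neq0 (p q : H) : q * p = 1 /\ p * q = 1 -> p \in predC1 0.
Proof.
by case=> _ /eqP; apply: contraTN => /eqP ->; rewrite mul0r eq_sym oner_eq0.
Qed.

Lemma qinv0 : {in [predC predC1 0], qinv =1 id}.
Proof.
by move=> q; rewrite !inE negbK => /eqP ->; apply: quatP => /=; rewrite ?oppr0 mul0r.
Qed.
HB.instance Definition _ :=
  GRing.NzRing_hasMulInverse.Build H qmulVq qmulqV qunit_neq0 qinv0.

Lemma qunitE (q : H) : (q \is a GRing.unit) = (q != 0).
Proof. by []. Qed.

End QuaternionDivisionRing.

Section DivisionRingLinearAlgebra.
Variable K : unitRingType.
Hypothesis unitK : forall x : K, (x \is a GRing.unit) = (x != 0).

Definition free_cols m n (M : 'M[K]_(m, n)) := forall x : 'cV_n, M *m x = 0 -> x = 0.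

Lemma delta_mx_neq0 m n (i : 'I_m) (j : 'I_n) : delta_mx i j != 0 :> 'M[K]_(m, n).
Proof. by apply/eqP => /matrixP /(_ i j); rewrite !mxE !eqxx => /eqP; rewrite oner_eq0. Qed.

Lemma mul_scalar_eq0 m n (A : 'M[K]_(m, n)) (s : K) :
  (A *m s%:M == 0) = (A == 0) || (s == 0).
Proof.
have [->|s_neq0] := eqVneq s 0; first by rewrite raddf0 mulmx0 eqxx orbT.
rewrite orbF; apply/eqP/eqP => [As0|->]; last exact: mul0mx.
by rewrite -[A]mulmx1 -(divrr (_ : s \is a GRing.unit)) ?unitK // scalar_mxM mulmxA As0 mul0mx.
Qed.

Lemma scalar_mx1_eq0 (s : K) : (s%:M == 0 :> 'M_1) = (s == 0).
Proof.
by apply/eqP/eqP => [/matrixP /(_ 0 0)|->]; rewrite ?raddf0 // !mxE eqxx mulr1n.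
Qed.

(* One step of Gaussian elimination: with a nonzero pivot M 0 0, a kernel
   vector of the Schur complement extends to a kernel vector of M. *)
Lemma kernel_pivot m n (M : 'M[K]_(1 + m, 1 + n)) (w : 'cV_n) :
  M 0 0 != 0 -> w != 0 ->
  (drsubmx M - dlsubmx M *m ((M 0 0)^-1 *: ursubmx M)) *m w = 0 ->
  exists2 z : 'cV_(1 + n), z != 0 & M *m z = 0.
Proof.
rewrite -unitK; set p := M 0 0; set u := ursubmx M; set v := dlsubmx M.
set N := drsubmx M => p0 wnz Sw.
have ulE : ulsubmx M = p%:M.
  by rewrite [LHS]mx11_scalar !mxE; congr (M _ _ )%:M; apply: val_inj.
exists (col_mx (- (p^-1 *: u *m w)) w).
  by apply: contraNneq wnz => /(congr1 dsubmx); rewrite col_mxKd linear0 => ->.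
rewrite -[M]submxK mul_block_col ulE mul_scalar_mx -/u -/v -/N.
rewrite scalerN -scalemxAl scalerA (divrr p0) scale1r addNr.
by rewrite scalemxAl (mulmxN v) mulmxA -mulNmx -mulmxDl addrC Sw col_mx0.
Qed.

Lemma xrow_kernel m n (i1 i2 : 'I_m) (M : 'M[K]_(m, n)) (z : 'cV_n) :
  xrow i1 i2 M *m z = 0 -> M *m z = 0.
Proof.
rewrite xrowE -mulmxA -xrowE => e; apply/matrixP => i j.
by have := congr1 (fun X : 'M_(m, 1) => X (tperm i1 i2 i) j) e; rewrite !mxE tpermK.
Qed.

Lemma wide_kernel m n (M : 'M[K]_(m, n)) :
  (m < n)%N -> exists2 z : 'cV_n, z != 0 & M *m z = 0.
Proof.
elim: m n M => [|m IH] [|n] M //= lt.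
  by exists (delta_mx 0 0); [apply: delta_mx_neq0 | apply: flatmx0].
have [col0|] := boolP [forall i, M i 0 == 0].
  exists (delta_mx 0 0); first exact: delta_mx_neq0.
  apply/matrixP => i j; rewrite ord1 !mxE (bigD1 0) //= big1 => [|k /negPf k0].
    by rewrite !mxE /= mulr1 addr0; apply/eqP/(forallP col0).
  by rewrite !mxE k0 /= mulr0.
rewrite negb_forall => /existsP [r Mr0].
set M' : 'M_(1 + m, 1 + n) := xrow 0 r M.
have p0 : M' 0 0 != 0 by rewrite mxE tpermL.
have [w wnz Sw] := IH _ (drsubmx M' - dlsubmx M' *m ((M' 0 0)^-1 *: ursubmx M')) lt.
have [z znz Mz] := kernel_pivot p0 wnz Sw.
by exists z => //; apply: xrow_kernel Mz.
Qed.

Lemma free_cols_solve n p (Z : 'M[K]_(n, p)) (y : 'cV_n) (z : 'cV_(p + 1)) :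
  free_cols Z -> z != 0 -> row_mx Z y *m z = 0 -> exists x, Z *m x = y.
Proof.
move=> freeZ znz; rewrite -[z]vsubmxK mul_row_col [dsubmx z]mx11_scalar.
set s := dsubmx z 0 0 => e.
have [s0|s_neq0] := eqVneq s 0.
  move: e; rewrite s0 raddf0 mulmx0 addr0 => /freeZ x0.
  by move: znz; rewrite -[z]vsubmxK x0 [dsubmx z]mx11_scalar -/s s0 raddf0 col_mx0 eqxx.
have Zu : Z *m usubmx z = - (y *m s%:M) by apply/eqP; rewrite -subr_eq0 opprK e.
exists (- (usubmx z *m s^-1%:M)).
by rewrite mulmxN mulmxA Zu mulNmx opprK -mulmxA -scalar_mxM divrr ?unitK // mulmx1.
Qed.

Lemma basis_in_cols_rinv n p (Z : 'M[K]_(n, p)) :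
  (forall k : 'I_n, exists x : 'cV_p, Z *m x = delta_mx k 0) ->
  exists X, Z *m X = 1%:M.
Proof.
move=> /fin_all_exists [f Zf]; exists (\matrix_(i, k) f k i 0); apply/matrixP => i k.
move/matrixP: (Zf k) => /(_ i 0); rewrite !mxE eqxx andbT => <-.
by apply: eq_bigr => j _; rewrite mxE.
Qed.

Lemma free_square_rinv n (M : 'M[K]_n) : free_cols M -> exists Q, M *m Q = 1%:M.
Proof.
move=> freeM; apply: basis_in_cols_rinv => k.
have [|z znz Mz] := wide_kernel (row_mx M (delta_mx k 0 : 'cV_n)); first by rewrite addn1.
exact: free_cols_solve freeM znz Mz.
Qed.

(* A free family of fewer than n vectors of K^n extends by a standard basis
   vector: otherwise every basis vector would be a combination of the p
   columns of Z, and the identity of K^n would factor through K^p. *)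
Lemma free_cols_extend n p (Z : 'M[K]_(n, p)) : (p < n)%N -> free_cols Z ->
  exists k : 'I_n, free_cols (row_mx Z (delta_mx k 0 : 'cV_n)).
Proof.
move=> lt_pn freeZ; apply: NNPP => no_ext.
have [X ZX] : exists X, Z *m X = 1%:M.
  apply: basis_in_cols_rinv => k; apply: NNPP => no_sol.
  apply: no_ext; exists k => z Zz; apply: NNPP => /eqP z_neq0.
  by apply: no_sol; apply: free_cols_solve freeZ z_neq0 Zz.
have [y y_neq0 Xy] := wide_kernel X lt_pn.
by move: y_neq0; rewrite -[y]mul1mx -ZX -mulmxA Xy mulmx0 eqxx.
Qed.

End DivisionRingLinearAlgebra.

Section IndependentVectors.
Variable R : rcfType.
Local Notation H := (quat R).
Local Notation unitH := (@qunitE R).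

Lemma rscale_entry m (v : 'cV[H]_m) (s : H) i j : (v *m s%:M) i j = v i 0 * s.
Proof. by rewrite !mxE big_ord1 !mxE [j]ord1 eqxx mulr1n. Qed.

Lemma rscaleA m (v : 'cV[H]_m) (s t : H) : v *m s%:M *m t%:M = v *m (s * t)%:M.
Proof. by rewrite -mulmxA -scalar_mxM. Qed.

Definition indep2 n (a b : 'cV[H]_n) :=
  forall s t : H, a *m s%:M + b *m t%:M = 0 -> s = 0 /\ t = 0.
Definition indep3 n (a b c : 'cV[H]_n) := forall s t u : H,
  a *m s%:M + b *m t%:M + c *m u%:M = 0 -> [/\ s = 0, t = 0 & u = 0].

Lemma indep2_free n (a b : 'cV[H]_n) : indep2 a b <-> free_cols (row_mx a b).
Proof.
split => [ab x|free_ab s t e].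
  rewrite -[x]vsubmxK mul_row_col [usubmx x]mx11_scalar [dsubmx x]mx11_scalar.
  by move=> /ab [-> ->]; rewrite raddf0 col_mx0.
move: (free_ab (col_mx s%:M t%:M)); rewrite mul_row_col => /(_ e) /eqP.
by rewrite col_mx_eq0 !scalar_mx1_eq0 => /andP [/eqP -> /eqP ->].
Qed.

Lemma indep3_free n (a b c : 'cV[H]_n) :
  indep3 a b c <-> free_cols (row_mx (row_mx a b) c).
Proof.
split => [abc x|free_abc s t u e].
  rewrite -[x]vsubmxK mul_row_col -[usubmx x]vsubmxK mul_row_col.
  rewrite [usubmx (usubmx x)]mx11_scalar [dsubmx (usubmx x)]mx11_scalar.
  by rewrite [dsubmx x]mx11_scalar => /abc [-> -> ->]; rewrite raddf0 !col_mx0.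
move: (free_abc (col_mx (col_mx s%:M t%:M) u%:M)); rewrite !mul_row_col.
move=> /(_ e) /eqP.
by rewrite !col_mx_eq0 !scalar_mx1_eq0 => /andP [/andP [/eqP -> /eqP ->] /eqP ->].
Qed.

Lemma free_col1 n (v : 'cV[H]_n) : v != 0 -> free_cols v.
Proof.
move=> vnz x; rewrite [x]mx11_scalar => /eqP.
by rewrite (mul_scalar_eq0 unitH) (negPf vnz) /= => /eqP ->; rewrite raddf0.
Qed.

Lemma extend_indep1 (z : 'cV[H]_3) : z != 0 -> exists e : 'cV[H]_3, indep2 z e.
Proof.
move/free_col1 => free_z; have [k free_ze] := free_cols_extend unitH (isT : (1 < 3)%N) free_z.
by exists (delta_mx k 0); apply/indep2_free.
Qed.

Lemma extend_indep2 (z z' : 'cV[H]_3) : indep2 z z' -> exists e : 'cV[H]_3, indep3 z z' e.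
Proof.
move/indep2_free => free_zz'.
have [k free_zz'e] := free_cols_extend unitH (isT : (2 < 3)%N) free_zz'.
by exists (delta_mx k 0); apply/indep3_free.
Qed.

(* Expansion of a matrix along a basis z0, z1, z2: with Q the inverse of the
   basis matrix, A = A [z0 z1 z2] Q splits into three rank-one pieces. *)
Lemma basis_expansion (z0 z1 z2 : 'cV[H]_3) : indep3 z0 z1 z2 ->
  exists q0 q1 q2 : 'rV[H]_3, forall m (A : 'M[H]_(m, 3)),
    A = A *m z0 *m q0 + A *m z1 *m q1 + A *m z2 *m q2.
Proof.
move/indep3_free/(free_square_rinv unitH) => [Q ZQ].
pose Q' : 'M_(1 + 1 + 1, 3) := Q.
exists (usubmx (usubmx Q')), (dsubmx (usubmx Q')), (dsubmx Q') => m A.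
rewrite -{1}[A]mulmx1 -ZQ mulmxA -[Q](@vsubmxK _ (1 + 1) 1 3) -[usubmx _](@vsubmxK _ 1 1 3).
rewrite -mulmxA (@mul_row_col _ 3 (1 + 1) 1 3) (@mul_row_col _ 3 1 1 3).
by rewrite !col_mxKu !col_mxKd !mulmxDr !mulmxA.
Qed.

Lemma rscale_solve n (p q : 'cV[H]_n) (u : H) : u != 0 ->
  p + q *m u%:M = 0 -> q = - p *m u^-1%:M.
Proof.
move=> u_neq0 /eqP; rewrite addrC addr_eq0 => /eqP qu.
by rewrite -[q]mulmx1 -(divrr (_ : u \is a GRing.unit)) ?unitH // scalar_mxM mulmxA qu.
Qed.

Lemma col_linv n (z : 'cV[H]_n) : z != 0 -> exists c : 'rV[H]_n, c *m z = 1%:M.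
Proof.
move=> z_neq0; have /existsP [k zk] : [exists k, z k 0 != 0].
  apply: contraNT z_neq0; rewrite negb_exists => /forallP zk.
  by apply/eqP/matrixP => i j; rewrite ord1 mxE; apply/eqP/negbNE/zk.
exists ((z k 0)^-1 *: delta_mx 0 k); rewrite -scalemxAl.
apply/matrixP => i j; rewrite !ord1 !mxE (bigD1 k) //= big1 => [|l /negPf lk].
  by rewrite !mxE !eqxx mul1r addr0 mulVr ?unitH.
by rewrite !mxE lk andbF mul0r.
Qed.

Lemma not_indep3_span n (a b c : 'cV[H]_n) : indep2 a b -> ~ indep3 a b c ->
  exists al be : H, c = a *m al%:M + b *m be%:M.
Proof.
move=> ab not_abc; apply: NNPP => no_span; apply: not_abc => s t u e.
have [u0|u_neq0] := eqVneq u 0.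
  by move: e; rewrite u0 raddf0 mulmx0 addr0 => /ab [-> ->].
case: no_span; exists (- (s / u)), (- (t / u)).
by rewrite (rscale_solve u_neq0 e) mulNmx mulmxDl !rscaleA !raddfN opprD.
Qed.

Lemma indep3_not_span n (a b c : 'cV[H]_n) (s t : H) :
  indep3 a b c -> c <> a *m s%:M + b *m t%:M.
Proof.
move=> abc cE; have := abc s t (-1).
rewrite raddfN mulmxN mulmx1 -cE subrr => /(_ erefl) [_ _ /eqP].
by rewrite oppr_eq0 oner_eq0.
Qed.

Lemma indep2_in_plane n (z e1 e2 : 'cV[H]_n) (c1 c2 : H) : indep3 z e1 e2 ->
  e1 *m c1%:M + e2 *m c2%:M != 0 -> indep2 z (e1 *m c1%:M + e2 *m c2%:M).
Proof.
move=> ze1e2 w_neq0 s t; rewrite mulmxDl !rscaleA addrA => /ze1e2 [-> c1t c2t].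
split => //; apply/eqP; apply: contraNT w_neq0 => t_neq0.
have /eqP := congr1 (fun x => x * t^-1) c1t; have /eqP := congr1 (fun x => x * t^-1) c2t.
rewrite !mul0r -!mulrA !divrr ?unitH // !mulr1 => /eqP -> /eqP ->.
by rewrite raddf0 !mulmx0 addr0.
Qed.

Lemma four_vectors_dependent (p q r w : 'cV[H]_3) : exists a b c d : H,
  [|| a != 0, b != 0, c != 0 | d != 0] /\
  p *m a%:M + q *m b%:M + r *m c%:M + w *m d%:M = 0.
Proof.
have [x] := wide_kernel unitH (row_mx (row_mx (row_mx p q) r) w) (isT : (3 < 4)%N).
rewrite -[x : 'cV_(1 + 1 + 1 + 1)]vsubmxK -[usubmx x]vsubmxK -[usubmx (usubmx x)]vsubmxK.
rewrite [usubmx (usubmx (usubmx x))]mx11_scalar [dsubmx (usubmx (usubmx x))]mx11_scalar.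
rewrite [dsubmx (usubmx x)]mx11_scalar [dsubmx x]mx11_scalar.
rewrite !col_mx_eq0 !scalar_mx1_eq0 !mul_row_col => x_neq0 e.
do 4 eexists; split; last exact: e.
by move: x_neq0; rewrite !negb_and -!orbA.
Qed.

End IndependentVectors.

Ltac quat_mx_field :=
  apply/matrixP => ? ?; rewrite !(rscale_entry, mxE, big_ord1); apply: quatP => /=; field.

Section QuaternionPencils.
Variable R : rcfType.
Local Notation H := (quat R).
Local Notation unitH := (@qunitE R).

(* A triad a (x) (b0, b1) (x) c is a rank-one 3 x 2 x 3 tensor, seen through
   its two frontal slices a b0 c and a b1 c. *)
Record triad := Triad { tcol : 'cV[H]_3; tmid0 : H; tmid1 : H; trow : 'rV[H]_3 }.
Definition slice0 (t : triad) : 'M[H]_3 := tcol t *m (tmid0 t)%:M *m trow t.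
Definition slice1 (t : triad) : 'M[H]_3 := tcol t *m (tmid1 t)%:M *m trow t.

Definition pencil_rank_le (A B : 'M[H]_3) (n : nat) := exists s : seq triad,
  [/\ (size s <= n)%N, A = \sum_(t <- s) slice0 t & B = \sum_(t <- s) slice1 t].

Lemma pencil_rank_le_add (A B A' B' : 'M[H]_3) n n' :
  pencil_rank_le A B n -> pencil_rank_le A' B' n' ->
  pencil_rank_le (A + A') (B + B') (n + n').
Proof.
case=> s [sz -> ->] [s' [sz' -> ->]]; exists (s ++ s').
by rewrite size_cat leq_add // !big_cat.
Qed.

Lemma pencil_rank_le_triad (t : triad) : pencil_rank_le (slice0 t) (slice1 t) 1.
Proof. by exists [:: t]; rewrite !big_seq1. Qed.

Lemma pencil_rank_le_row (p p' : 'cV[H]_3) (q : 'rV[H]_3) :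
  pencil_rank_le (p *m q) (p' *m q) 2.
Proof.
exists [:: Triad p 1 0 q; Triad p' 0 1 q].
by split => //; rewrite !big_cons big_nil /slice0 /slice1 /=; quat_mx_field.
Qed.

Definition qhalf : H := Quat (1 / 2) 0 0 0.

(* A "shift" pencil (P1 Q1 + P2 Q2; P2 Q1 + W Q2) has rank at most 3: the
   triads (P1 + P2)(1/2, 1/2)(Q1 + Q2) and (P1 - P2)(1/2, -1/2)(Q1 - Q2) give
   (P1 Q1 + P2 Q2; P1 Q2 + P2 Q1), and (W - P1)(0, 1) Q2 corrects the second
   slice. *)
Lemma shift_pencil2 (p1 p2 w : 'cV[H]_3) (q1 q2 : 'rV[H]_3) :
  pencil_rank_le (p1 *m q1 + p2 *m q2) (p2 *m q1 + w *m q2) 3.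
Proof.
exists [:: Triad (p1 + p2) qhalf qhalf (q1 + q2); Triad (p1 - p2) qhalf (- qhalf) (q1 - q2);
           Triad (w - p1) 0 1 q2].
by split => //; rewrite !big_cons big_nil /slice0 /slice1 /=; quat_mx_field.
Qed.

Lemma shift_pencil3 (p1 p2 p3 w : 'cV[H]_3) (q1 q2 q3 : 'rV[H]_3) :
  pencil_rank_le (p1 *m q1 + p2 *m q2 + p3 *m q3) (p2 *m q1 + p3 *m q2 + w *m q3) 4.
Proof.
exists [:: Triad (p1 - p3) 1 0 q1; Triad (p2 + p3) qhalf qhalf (q1 + q2 + q3);
           Triad (p2 - p3) qhalf (- qhalf) (- q1 + q2 - q3); Triad (w - p2) 0 1 q3].
by split => //; rewrite !big_cons big_nil /slice0 /slice1 /=; quat_mx_field.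
Qed.

Definition pencil_eigvec (A B : 'M[H]_3) (z : 'cV[H]_3) := z != 0 /\
  exists (a : 'cV[H]_3) (b0 b1 : H), A *m z = a *m b0%:M /\ B *m z = a *m b1%:M.

Lemma eigvec_of_dependent_pair (A B : 'M[H]_3) (z1 z2 : 'cV[H]_3) (t u : H) :
  B *m z1 = A *m z2 -> z1 *m t%:M + z2 *m u%:M = 0 ->
  (t != 0) || (u != 0) -> (z1 != 0) || (z2 != 0) ->
  pencil_eigvec A B z1 \/ pencil_eigvec A B z2.
Proof.
move=> Bz1 rel tu z12; have [u0|u_neq0] := eqVneq u 0.
  move: rel tu; rewrite u0 raddf0 mulmx0 addr0 eqxx orbF => /eqP.
  rewrite (mul_scalar_eq0 unitH) => /orP [/eqP z1_0|/eqP->]; last by rewrite eqxx.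
  move: z12; rewrite z1_0 eqxx /= => z2_neq0 _; right; split => //.
  by exists (B *m z2), 0, 1; rewrite mulmx1 raddf0 mulmx0 -Bz1 z1_0 mulmx0.
have z2E := rscale_solve u_neq0 rel.
have z1_neq0 : z1 != 0.
  by apply: contraTneq z12 => z1_0; rewrite z2E z1_0 !(mul0mx, oppr0) eqxx.
left; split => //; exists (A *m z1), 1, (- t / u).
by rewrite mulmx1 Bz1 z2E mulNmx mulmxN rscaleA mulNr mulmxA raddfN mulmxN.
Qed.

(* Common kernel, first case: an eigenvector independent of the kernel vector
   z gives, in a basis z, z', e, the decomposition
   (a b0 q1 + (A e) q2; a b1 q1 + (B e) q2). *)
Lemma common_kernel_eigvec_rank3 (A B : 'M[H]_3) (z z' : 'cV[H]_3) :
  A *m z = 0 -> B *m z = 0 -> indep2 z z' -> pencil_eigvec A B z' ->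
  pencil_rank_le A B 3.
Proof.
move=> Az Bz zz' [_ [a [b0 [b1 [Az' Bz']]]]].
have [e zz'e] := extend_indep2 zz'; have [q0 [q1 [q2 expand]]] := basis_expansion zz'e.
rewrite (expand _ A) (expand _ B) Az Bz Az' Bz' !mul0mx !add0r.
exact: (pencil_rank_le_add (pencil_rank_le_triad (Triad a b0 b1 q1))
                           (pencil_rank_le_row (A *m e) (B *m e) q2)).
Qed.

Lemma shift_basis_indep (A B : 'M[H]_3) (z e1 e2 z1 z2 : 'cV[H]_3) (x1 x2 x3 x4 : H) :
  z1 = e1 *m x1%:M + e2 *m x2%:M -> z2 = e1 *m x3%:M + e2 *m x4%:M ->
  indep3 z e1 e2 -> [|| x1 != 0, x2 != 0, x3 != 0 | x4 != 0] ->
  B *m z1 = A *m z2 -> (forall w, indep2 z w -> ~ pencil_eigvec A B w) ->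
  indep3 z z1 z2.
Proof.
move=> z1E z2E ze1e2 x_neq0 Bz1 no_eig s t u.
have coords : z1 *m t%:M + z2 *m u%:M =
    e1 *m (x1 * t + x3 * u)%:M + e2 *m (x2 * t + x4 * u)%:M.
  by rewrite z1E z2E; quat_mx_field.
rewrite -addrA coords addrA => /ze1e2 [-> c1 c2].
have rel : z1 *m t%:M + z2 *m u%:M = 0 by rewrite coords c1 c2 raddf0 !mulmx0 addr0.
have z12 : (z1 != 0) || (z2 != 0).
  apply: contraTT x_neq0; rewrite negb_or !negbK => /andP [/eqP z1_0 /eqP z2_0].
  have := ze1e2 0 x1 x2; rewrite raddf0 mulmx0 add0r -z1E => /(_ z1_0) [_ -> ->].
  have := ze1e2 0 x3 x4; rewrite raddf0 mulmx0 add0r -z2E => /(_ z2_0) [_ -> ->].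
  by rewrite eqxx.
suff /andP [/eqP-> /eqP->] : (t == 0) && (u == 0) by [].
apply: contraT; rewrite negb_and => tu.
have no_eig_plane (y : 'cV[H]_3) (c1' c2' : H) : y = e1 *m c1'%:M + e2 *m c2'%:M ->
    y != 0 -> ~ pencil_eigvec A B y.
  by move=> -> y_neq0; apply: no_eig; apply: indep2_in_plane.
have [eig|eig] := eigvec_of_dependent_pair Bz1 rel tu z12.
- by case: (no_eig_plane _ _ _ z1E (proj1 eig) eig).
- by case: (no_eig_plane _ _ _ z2E (proj1 eig) eig).
Qed.

Lemma common_kernel_rank3 (A B : 'M[H]_3) (z : 'cV[H]_3) :
  z != 0 -> A *m z = 0 -> B *m z = 0 -> pencil_rank_le A B 3.
Proof.
move=> z_neq0 Az Bz.
have [[w [zw eig]]|no_eig] := classic (exists w, indep2 z w /\ pencil_eigvec A B w).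
  exact: common_kernel_eigvec_rank3 Az Bz zw eig.
have [e1 ze1] := extend_indep1 z_neq0; have [e2 ze1e2] := extend_indep2 ze1.
have [x1 [x2 [x3 [x4 [x_neq0 rel]]]]] :=
  four_vectors_dependent (B *m e1) (B *m e2) (- (A *m e1)) (- (A *m e2)).
have Bz1 : B *m (e1 *m x1%:M + e2 *m x2%:M) = A *m (e1 *m x3%:M + e2 *m x4%:M).
  apply/eqP; rewrite -subr_eq0 -[X in _ == X]rel !mulmxDr !mulmxA !mulNmx.
  by rewrite opprD addrA.
have /basis_expansion [q0 [q1 [q2 expand]]] := shift_basis_indep erefl erefl ze1e2 x_neq0 Bz1
  (fun w zw eig => no_eig (ex_intro _ w (conj zw eig))).
rewrite (expand _ A) (expand _ B) Az Bz !mul0mx !add0r Bz1.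
exact: shift_pencil2.
Qed.

Lemma free_of_no_eigvec (A B : 'M[H]_3) :
  (forall z, ~ pencil_eigvec A B z) -> free_cols A.
Proof.
move=> no_eig x Ax; apply: NNPP => /eqP x_neq0; apply: (no_eig x); split => //.
by exists (B *m x), 0, 1; rewrite Ax raddf0 mulmx0 mulmx1.
Qed.

Lemma no_eigvec_indep2 n (D : 'M[H]_n) (v : 'cV[H]_n) :
  (forall (y : 'cV[H]_n) (l : H), y != 0 -> D *m y <> y *m l%:M) ->
  v != 0 -> indep2 v (D *m v).
Proof.
move=> no_eig v_neq0 s t e; have [t0|t_neq0] := eqVneq t 0.
  move: e; rewrite t0 raddf0 mulmx0 addr0 => /eqP.
  by rewrite (mul_scalar_eq0 unitH) (negPf v_neq0) => /eqP.
case: (no_eig v (- s / t) v_neq0).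
by rewrite (rscale_solve t_neq0 e) mulNmx rscaleA mulNr raddfN mulmxN.
Qed.

Lemma cyclic_rank4 (A B D : 'M[H]_3) (v : 'cV[H]_3) :
  (forall y : 'cV[H]_3, B *m y = A *m (D *m y)) ->
  indep3 v (D *m v) (D *m (D *m v)) ->
  pencil_rank_le A B 4.
Proof.
move=> BD /basis_expansion [q0 [q1 [q2 expand]]].
rewrite (expand _ A) (expand _ B) !BD; exact: shift_pencil3.
Qed.

Lemma invariant_plane n (D : 'M[H]_n) (v : 'cV[H]_n) (al be a b : H) :
  D *m (D *m v) = v *m al%:M + (D *m v) *m be%:M ->
  D *m (v *m a%:M + (D *m v) *m b%:M) =
  v *m (al * b)%:M + (D *m v) *m (a + be * b)%:M.
Proof.
move=> DDv; rewrite mulmxDr (mulmxA D v) (mulmxA D (D *m v)) DDv.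
by move: (D *m v) => w; quat_mx_field.
Qed.

(* Two independent vectors of the plane spanned by u, u' span u: the 2 x 2
   matrix of coordinates has free columns, hence a right inverse. *)
Lemma span2_exchange n (y y' u u' : 'cV[H]_n) (b1 b2 c1 c2 : H) :
  indep2 y y' -> y = u *m b1%:M + u' *m b2%:M -> y' = u *m c1%:M + u' *m c2%:M ->
  exists w1 w2 : H, u = y *m w1%:M + y' *m w2%:M.
Proof.
move=> yy' yE y'E.
pose C : 'M[H]_(1 + 1) := block_mx b1%:M c1%:M b2%:M c2%:M.
have YUC : row_mx y y' = row_mx u u' *m C by rewrite mul_row_block -yE -y'E.
have freeC : free_cols C.
  by move=> x Cx; apply: (proj1 (indep2_free y y') yy'); rewrite YUC -mulmxA Cx mulmx0.
have [C' CC'] := free_square_rinv unitH freeC.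
have UYC : row_mx u u' = row_mx y y' *m C' by rewrite YUC -mulmxA CC' mulmx1.
have := congr1 (mulmx^~ (col_mx (1%:M : 'M_1) 0)) UYC.
rewrite mul_row_col mulmx1 mulmx0 addr0 -mulmxA.
set w := C' *m _; rewrite -[w]vsubmxK mul_row_col.
by rewrite [usubmx w]mx11_scalar [dsubmx w]mx11_scalar => ->; do 2 eexists.
Qed.

(* Otherwise every nonzero v spans with Dv a D-invariant plane.  Take a basis
   v, Dv, u; the invariant planes of v and of u meet in some y <> 0, and the
   independent vectors y, Dy then span both planes, putting u in the plane
   of v. *)
Lemma cyclic_vector (D : 'M[H]_3) :
  (forall (y : 'cV[H]_3) (l : H), y != 0 -> D *m y <> y *m l%:M) ->
  exists v : 'cV[H]_3, indep3 v (D *m v) (D *m (D *m v)).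
Proof.
move=> no_eig; apply: NNPP => no_cyclic.
have indepD := no_eigvec_indep2 no_eig.
have plane (v : 'cV[H]_3) : v != 0 ->
    exists al be : H, D *m (D *m v) = v *m al%:M + (D *m v) *m be%:M.
  move=> v_neq0; apply: not_indep3_span (indepD _ v_neq0) _.
  by move=> cyc; apply: no_cyclic; exists v.
pose v : 'cV[H]_3 := delta_mx 0 0; have v_neq0 : v != 0 by apply: delta_mx_neq0.
have [u vDvu] := extend_indep2 (indepD _ v_neq0).
have u_neq0 : u != 0.
  apply/eqP => u0; have := indep3_not_span (s := 0) (t := 0) vDvu.
  by rewrite u0 raddf0 !mulmx0 addr0; apply.
have [al [be DDv]] := plane v v_neq0; have [ga [de DDu]] := plane u u_neq0.
have [a1 [a2 [b1 [b2 [ab_neq0 rel]]]]] :=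
  four_vectors_dependent v (D *m v) (- u) (- (D *m u)).
set y := v *m a1%:M + (D *m v) *m a2%:M.
have yu : y = u *m b1%:M + (D *m u) *m b2%:M.
  by apply/eqP; rewrite -subr_eq0 -[X in _ == X]rel !mulNmx opprD addrA.
have y_neq0 : y != 0.
  apply: contraTneq ab_neq0 => y0.
  have [-> ->] := indepD _ v_neq0 _ _ y0.
  by have [-> ->] := indepD _ u_neq0 b1 b2 (etrans (esym yu) y0); rewrite eqxx.
have Dyu : D *m y = u *m (ga * b2)%:M + (D *m u) *m (b1 + de * b2)%:M.
  by rewrite yu; apply: invariant_plane.
have [w1 [w2 uE]] := span2_exchange (indepD _ y_neq0) yu Dyu.
apply: (indep3_not_span (s := a1 * w1 + al * a2 * w2)
  (t := a2 * w1 + (a1 + be * a2) * w2) vDvu).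
rewrite uE (invariant_plane _ _ DDv) /y.
by move: (D *m v) => Dv; quat_mx_field.
Qed.

(* A pencil without eigenvectors has rank at most 4: with B = A D for
   D = A^-1 B, a cyclic vector of D gives a shift pencil. *)
Lemma no_eigvec_rank4 (A B : 'M[H]_3) :
  (forall z, ~ pencil_eigvec A B z) -> pencil_rank_le A B 4.
Proof.
move=> no_eig; have [Ainv AAinv] := free_square_rinv unitH (free_of_no_eigvec no_eig).
have BD (y : 'cV[H]_3) : B *m y = A *m (Ainv *m B *m y).
  by rewrite !mulmxA AAinv mul1mx.
have [|v cyc] := @cyclic_vector (Ainv *m B); last exact: cyclic_rank4 BD cyc.
move=> y l y_neq0 Dy; apply: (no_eig y); split => //.
by exists (A *m y), 1, l; rewrite mulmx1 BD Dy mulmxA.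
Qed.

(* Every 3 x 2 x 3 quaternion pencil has rank at most 4: an eigenvector z,
   with A z = a b0 and B z = a b1, is killed after removing one triad
   a (x) (b0, b1) (x) c with c z = 1, leaving a common kernel vector. *)
Lemma pencil_rank_le4 (A B : 'M[H]_3) : pencil_rank_le A B 4.
Proof.
have [[z [z_neq0 [a [b0 [b1 [Az Bz]]]]]]|no_eig] :=
  classic (exists z, pencil_eigvec A B z); last first.
  by apply: no_eigvec_rank4 => z eig; apply: no_eig; exists z.
have [c cz] := col_linv z_neq0.
have deflated : pencil_rank_le (A - a *m b0%:M *m c) (B - a *m b1%:M *m c) 3.
  apply: (common_kernel_rank3 z_neq0);
  by rewrite mulmxBl -(mulmxA _ c) cz mulmx1 ?Az ?Bz subrr.
rewrite -[A](subrK (a *m b0%:M *m c)) -[B](subrK (a *m b1%:M *m c)).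
exact: pencil_rank_le_add deflated (pencil_rank_le_triad (Triad a b0 b1 c)).
Qed.

End QuaternionPencils.

Section TensorRank.
Variable R : rcfType.
Local Notation H := (quat R).

Definition triad_tensor (t : triad R) : qtensor R 3 2 3 :=
  fun i j k => tcol t i 0 * (if j == 0 then tmid0 t else tmid1 t) * trow t 0 k.

Lemma triad_tensorE (t : triad R) i j k :
  triad_tensor t i j k = (if j == 0 then slice0 t else slice1 t) i k.
Proof. by rewrite /triad_tensor; case: (j == 0); rewrite !(mxE, big_ord1, rscale_entry). Qed.

Lemma foldr_qadd (I : Type) (r : seq I) (f : I -> H) :
  foldr (@qadd R) (qzero R) (map f r) = \sum_(x <- r) f x.
Proof. by elim: r => [|x r IH] /=; rewrite ?big_nil ?big_cons ?IH. Qed.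

(* A sum of at most r triads has tensor rank at most r: the triads with a
   nonzero tensor are simple tensors, and the others can be dropped. *)
Lemma qrank_le_triads (T : qtensor R 3 2 3) (s : seq (triad R)) (r : nat) :
  (size s <= r)%N -> (forall i j k, T i j k = \sum_(t <- s) triad_tensor t i j k) ->
  qrank_le T r.
Proof.
move=> sz eT.
pose nz (t : triad R) := [exists i, exists j, exists k, triad_tensor t i j k != 0].
pose s' := filter nz s; pose t0 := Triad 0 (0 : H) 0 0.
exists (size s'), (fun l => triad_tensor (nth t0 s' l)); split; [|split].
- by rewrite size_filter (leq_trans (count_size _ _)).
- move=> l; have /(all_nthP t0) /(_ l (ltn_ord l)) := filter_all nz s.
  rewrite /nz => /existsP [i /existsP [j /existsP [k /eqP t_neq0]]].
  split; first by exists i, j, k.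
  by exists (fun i => tcol (nth t0 s' l) i 0),
    (fun j => if j == 0 then tmid0 (nth t0 s' l) else tmid1 (nth t0 s' l)),
    (fun k => trow (nth t0 s' l) 0 k).
- move=> i j k; rewrite /tsum -map_comp foldr_qadd big_enum /=.
  rewrite eT (bigID nz) /= [X in _ + X]big1 ?addr0 => [|t]; last first.
    by rewrite /nz => /existsPn /(_ i) /existsPn /(_ j) /existsPn /(_ k) /negPn /eqP.
  rewrite -big_filter (big_nth t0) big_mkord.
  by apply: eq_bigl => l; rewrite inE.
Qed.

End TensorRank.

Theorem mainTheorem12 (R : rcfType) (T : qtensor R 3 2 3) : qrank_le T 4.
Proof.
pose slice (j : 'I_2) : 'M[quat R]_3 := \matrix_(i, k) T i j k.
have [s [sz eA eB]] := pencil_rank_le4 (slice 0) (slice 1).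
apply: (qrank_le_triads sz) => i j k.
have -> : T i j k = (if j == 0 then slice 0 else slice 1) i k.
  case: ifP => [/eqP -> |]; rewrite mxE // => j_neq0; congr T.
  by apply/val_inj; case: j j_neq0 => [[|[|]]].
under eq_bigr do rewrite triad_tensorE.
by case: (j == 0); rewrite ?eA ?eB summxE.
Qed.
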